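(* For every $e\in\mathtt{CA}$ and all $c,d\in\mathtt{CA}$, \[\delta(e\circ c,e\circ d)\le(2r(e)+1)\,\delta(c,d).\] In particular, $c\mapsto e\circ c$ is Lipschitz continuous on $(\mathtt{CA},\delta)$.
   Context: $\Sigma$ is a finite alphabet with $|\Sigma|\ge2$. For $r\in\mathbb{N}$, $N(r)=[-r,r]$. A cellular automaton (CA) is a map $c:\Sigma^\mathbb{Z}\to\Sigma^\mathbb{Z}$ of the form $c(x)_i=F(x_{[i-r,i+r]})$ for some local function $F:\Sigma^{N(r)}\to\Sigma$; any such $r$ is a radius and $r(c)$ denotes the minimal radius. $\mathtt{CA}$ is the set of all CA. For $c,d\in\mathtt{CA}$ with common radius $r$, $D^c_d=\{w\in\Sigma^{N(r)}\mid$ the local rules of $c$ and $d$ give different outputs on $w\}$ (equivalently, $c(x)_0\neq d(x)_0$ for $x_{[-r,r]}=w$), and $\delta(c,d)=|D^c_d|/|\Sigma|^{2r+1}$, independent of $r$. *)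

From HB Require Import structures.
From mathcomp Require Import all_boot all_order all_algebra.
Set Implicit Arguments. Unset Strict Implicit. Unset Printing Implicit Defensive.
Import Order.TTheory GRing.Theory Num.Theory.
Local Open Scope ring_scope.

Definition config (S : finType) := int -> S.

(* Local patterns on N(r) = [-r,r], indexed by 'I_(2r+1): index k <-> position k - r. *)
Definition pattern (S : finType) (r : nat) := {ffun 'I_(r.*2.+1) -> S}.

Definition window (S : finType) (r : nat) (x : config S) (i : int) : pattern S r :=
  [ffun k : 'I_(r.*2.+1) => x (i - r%:Z + (k : nat)%:Z)].

Definition is_radius (S : finType) (c : config S -> config S) (r : nat) : Prop :=
  exists F : pattern S r -> S, forall (x : config S) (i : int), c x i = F (window r x i).

Definition is_CA (S : finType) (c : config S -> config S) : Prop :=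
  exists r, is_radius c r.

(* A configuration x with x_[-r,r] = w (positions outside N(r) filled with w at -r). *)
Definition extend (S : finType) (r : nat) (w : pattern S r) : config S :=
  fun j => w (inord `|(j + r%:Z)%R|%N).

Definition Dset (S : finType) (r : nat) (c d : config S -> config S) : {set pattern S r} :=
  [set w : pattern S r | c (extend w) 0 != d (extend w) 0].

(* delta(c,d) computed at common radius r: |D^c_d| / |Sigma|^(2r+1). *)
Definition delta_at (S : finType) (r : nat) (c d : config S -> config S) : rat :=
  (#|Dset r c d|)%:R / ((#|S| ^ r.*2.+1)%N)%:R.

From HB Require Import structures.
From mathcomp Require Import all_boot all_order all_algebra.
From mathcomp Require Import zify ring.
Import Order.TTheory GRing.Theory Num.Theory.

(* Let e have radius re with local rule Fe, let c, d have a common radius r1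
   and e \o c, e \o d a common radius r2.  Both densities are compared at the
   large radius R = r2 + r1 + re: the restriction of a pattern w on N(R) to a
   translate of N(r) inside N(R) is a "subpattern" of w, and every set of
   subpatterns lifts to a set of R-patterns of size |A| * |S|^(2R - 2r)
   ([card_subpattern_preimage]), so delta_at r c d equals
   |Dset r c d| * |S|^(2R - 2r) / |S|^(2R+1) ([delta_at_lift]).
   If e \o c and e \o d differ at 0 on w, then c and d already differ at some
   position j in N(re), since e only reads that neighbourhood
   ([local_rule_difference]); hence the lift of D^{e o c}_{e o d} is covered by
   the 2re+1 lifts of D^c_d shifted by j ([lifted_Dset_comp_cover]).  The union
   bound then gives the inequality between numerators, and dividing by the
   common denominator |S|^(2R+1) yields the theorem.  The argument works for
   any radius re of e. *)

Definition subpattern (S : finType) (n m : nat) (t : nat) (w : {ffun 'I_n.+1 -> S})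
  : {ffun 'I_m.+1 -> S} :=
  [ffun j : 'I_m.+1 => w (inord (t + j))].

Arguments subpattern {S n m} t w.

Lemma prod_outside_block (n m t k : nat) : t + m <= n ->
  \prod_(i < n.+1) (if t <= i < t + m.+1 then 1 else k) = k ^ (n - m).
Proof.
move=> htm.
rewrite -(big_mkord xpredT (fun i => if t <= i < t + m.+1 then 1 else k)).
rewrite (big_cat_nat _ (n := t)) //=; last by lia.
rewrite (big_cat_nat _ (m := t) (n := t + m.+1)) //=; last by lia.
rewrite (eq_big_nat _ _ (F2 := fun _ => k)); last by move=> i hi; rewrite ifF //; lia.
rewrite [X in _ * (_ * X)](eq_big_nat _ _ (F2 := fun _ => k));
  last by move=> i hi; rewrite ifF //; lia.
rewrite [X in _ * (X * _)](eq_big_nat _ _ (F2 := fun _ => 1));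
  last by move=> i hi; rewrite ifT //; lia.
- by rewrite !prod_nat_const_nat exp1n mul1n -expnD; congr (_ ^ _); lia.
- by lia.
Qed.

(* Fixing a subpattern fixes m+1 of the n+1 letters; the others are free. *)
Lemma card_subpattern_fiber (S : finType) (n m t : nat) (a : {ffun 'I_m.+1 -> S}) :
  t + m <= n ->
  #|[pred w : {ffun 'I_n.+1 -> S} | subpattern t w == a]| = #|S| ^ (n - m).
Proof.
move=> htm.
pose F (i : 'I_n.+1) := if t <= i < t + m.+1 then pred1 (a (inord (i - t))) else predT.
have -> : #|[pred w : {ffun 'I_n.+1 -> S} | subpattern t w == a]| = #|family F|.
  apply: eq_card => w; rewrite !inE; apply/eqP/familyP.
  - move=> hw i; subst a; rewrite /F; case: ifP => [/andP[hti hit]|_]; last by rewrite inE.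
    rewrite inE /= ffunE inordK; last by have := ltn_ord i; lia.
    by rewrite subnKC // inord_val.
  - move=> hw; apply/ffunP => j; rewrite ffunE.
    have hj := ltn_ord j.
    have hwj := hw (inord (t + j)).
    rewrite /F inordK ?ifT /= ?addKn ?inord_val in hwj; try lia.
    exact/eqP.
rewrite card_family foldrE big_map big_enum /= -(@prod_outside_block n m t #|S| htm).
by apply: eq_bigr => i _; rewrite /F; case: ifP; rewrite ?card1 ?cardT.
Qed.

(* Each subpattern in A has the same number of extensions. *)
Lemma card_subpattern_preimage (S : finType) (n m t : nat)
    (A : {set {ffun 'I_m.+1 -> S}}) : t + m <= n ->
  #|[set w : {ffun 'I_n.+1 -> S} | subpattern t w \in A]| = #|A| * #|S| ^ (n - m).
Proof.
move=> htm.
rewrite -sum1_card (partition_big (subpattern t) (mem A)) /=; last by move=> w; rewrite inE.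
rewrite -sum_nat_const; apply: eq_bigr => a aA.
rewrite -(@card_subpattern_fiber S n m t a htm) -sum1_card; apply: eq_bigl => w; rewrite !inE.
by case: (subpattern t w =P a) => [->|]; rewrite ?aA ?andbF.
Qed.

Lemma card_bigcup_ord_leq (T : finType) (k : nat) (P : 'I_k -> {set T}) :
  #|\bigcup_(j < k) P j| <= \sum_(j < k) #|P j|.
Proof.
elim/big_ind2: _ => // [|m A n B hA hB]; first by rewrite cards0.
by rewrite (leq_trans (leq_card_setU A B)) // leq_add.
Qed.

Lemma window_extend (S : finType) (R r t : nat) (i : int) (w : pattern S R) :
  (i + R%:Z = (t + r)%:Z)%R -> window r (extend w) i = subpattern t w.
Proof.
move=> hi; apply/ffunP => j; rewrite !ffunE /extend.
by have -> : (i - r%:Z + (j : nat)%:Z + R%:Z = (t + j)%:Z)%R by lia.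
Qed.

Lemma window_extend0 (S : finType) (r : nat) (w : pattern S r) :
  window r (extend w) 0 = w.
Proof.
rewrite (@window_extend S r r 0 0 w); last by lia.
by apply/ffunP => j; rewrite ffunE add0n inord_val.
Qed.

Lemma mem_Dset (S : finType) (r : nat) (c d : config S -> config S)
    (Fc Fd : pattern S r -> S) :
  (forall x i, c x i = Fc (window r x i)) -> (forall x i, d x i = Fd (window r x i)) ->
  forall w, (w \in Dset r c d) = (Fc w != Fd w).
Proof. by move=> hc hd w; rewrite inE hc hd window_extend0. Qed.

Arguments mem_Dset {S r c d Fc Fd}.

Lemma local_rule_difference (S : finType) (re : nat) (e : config S -> config S)
    (Fe : pattern S re -> S) (y z : config S) :
  (forall x i, e x i = Fe (window re x i)) -> e y 0 != e z 0 ->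
  exists j : 'I_re.*2.+1, y (j%:Z - re%:Z)%R != z (j%:Z - re%:Z)%R.
Proof.
move=> hFe; rewrite !hFe => hne.
have [j hj] : exists j, window re y 0 j != window re z 0 j.
  apply/existsP; apply: contraR hne; rewrite negb_exists => /forallP hall.
  by apply/eqP; congr Fe; apply/ffunP => j; apply/eqP/negPn.
by exists j; move: hj; rewrite !ffunE add0r addrC.
Qed.

Arguments local_rule_difference {S re e Fe y z}.

Section Composition.

Variables (S : finType) (e c d : config S -> config S) (re r1 r2 : nat).
Variables (Fe : pattern S re -> S) (Fc Fd : pattern S r1 -> S).
Variables (Gc Gd : pattern S r2 -> S).
Hypothesis hFe : forall x i, e x i = Fe (window re x i).
Hypothesis hFc : forall x i, c x i = Fc (window r1 x i).
Hypothesis hFd : forall x i, d x i = Fd (window r1 x i).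
Hypothesis hGc : forall x i, (e \o c) x i = Gc (window r2 x i).
Hypothesis hGd : forall x i, (e \o d) x i = Gd (window r2 x i).

(* Patterns on N(R) large enough to see all the windows involved. *)
Let R := r2 + r1 + re.

Lemma lifted_Dset_comp_cover :
  [set w : pattern S R | subpattern (r1 + re) w \in Dset r2 (e \o c) (e \o d)]
  \subset \bigcup_(j < re.*2.+1) [set w : pattern S R | subpattern (r2 + j) w \in Dset r1 c d].
Proof.
apply/subsetP => w; rewrite inE (mem_Dset hGc hGd) => hne.
have hcentre : window r2 (extend w) 0 = subpattern (r1 + re) w.
  by apply: (@window_extend S R r2 (r1 + re) 0 w); lia.
have [j hj] : exists j : 'I_re.*2.+1,
    c (extend w) (j%:Z - re%:Z)%R != d (extend w) (j%:Z - re%:Z)%R.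
  by apply: (local_rule_difference hFe); rewrite -!/((e \o _) _ _) hGc hGd hcentre.
have hwin : window r1 (extend w) (j%:Z - re%:Z)%R = subpattern (r2 + j) w.
  by apply: (@window_extend S R r1 (r2 + j) _ w); lia.
apply/bigcupP; exists j => //; rewrite inE (mem_Dset hFc hFd) -hwin.
by rewrite hFc hFd in hj.
Qed.

Lemma card_lifted_Dset_comp :
  #|Dset r2 (e \o c) (e \o d)| * #|S| ^ (R.*2 - r2.*2)
  <= re.*2.+1 * (#|Dset r1 c d| * #|S| ^ (R.*2 - r1.*2)).
Proof.
rewrite -(@card_subpattern_preimage S R.*2 r2.*2 (r1 + re)); last by lia.
apply: (leq_trans (subset_leq_card lifted_Dset_comp_cover)).
apply: (leq_trans (card_bigcup_ord_leq _ _ _)).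
have -> : re.*2.+1 * (#|Dset r1 c d| * #|S| ^ (R.*2 - r1.*2))
    = \sum_(j < re.*2.+1) (#|Dset r1 c d| * #|S| ^ (R.*2 - r1.*2)).
  by rewrite big_const_ord iter_addn_0 mulnC.
apply: leq_sum => j _.
by rewrite (@card_subpattern_preimage S R.*2 r1.*2 (r2 + j)) //; have := ltn_ord j; lia.
Qed.

End Composition.

Arguments card_lifted_Dset_comp {S e c d re r1 r2 Fe Fc Fd Gc Gd}.

Local Open Scope ring_scope.

Lemma delta_at_lift (S : finType) (r R : nat) (c d : config S -> config S) :
  (0 < #|S|)%N -> (r <= R)%N ->
  delta_at r c d = (#|Dset r c d| * #|S| ^ (R.*2 - r.*2))%N%:R / (#|S| ^ R.*2.+1)%:R.
Proof.
move=> hS hrR; rewrite /delta_at.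
have -> : (#|S| ^ R.*2.+1 = #|S| ^ (R.*2 - r.*2) * #|S| ^ r.*2.+1)%N.
  by rewrite -expnD; f_equal; lia.
have nz k : (#|S| ^ k)%:R != 0 :> rat by rewrite pnatr_eq0 expn_eq0 negb_and -lt0n hS.
by rewrite !natrM; field; rewrite !nz.
Qed.

Theorem lemma4p1 (S : finType) (hS : (1 < #|S|)%N)
  (e c d : config S -> config S)
  (re : nat) (hre : is_radius e re) (hmin : forall r, is_radius e r -> (re <= r)%N)
  (r1 : nat) (hc : is_radius c r1) (hd : is_radius d r1)
  (r2 : nat) (hec : is_radius (e \o c) r2) (hed : is_radius (e \o d) r2) :
  delta_at r2 (e \o c) (e \o d) <= (re.*2.+1)%:R * delta_at r1 c d.
Proof.
move: hre hc hd hec hed => [Fe hFe] [Fc hFc] [Fd hFd] [Gc hGc] [Gd hGd].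
have hS0 : (0 < #|S|)%N by lia.
rewrite (@delta_at_lift S r2 (r2 + r1 + re)) //; last by lia.
rewrite (@delta_at_lift S r1 (r2 + r1 + re)) //; last by lia.
rewrite mulrA -natrM ler_pM2r ?invr_gt0 ?ltr0n ?expn_gt0 ?hS0 // ler_nat.
exact: (card_lifted_Dset_comp hFe hFc hFd hGc hGd).
Qed.
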